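(* Let $p\in(0,1)$ and let $(\lambda_n)_{n\ge1}$ be a sequence with $\lambda_1=1$ and $0<\lambda_n\le\lambda_{n-1}$ for all $n>1$. Let $r_1,r_2,\dots$ be $\{0,1\}$-valued random variables with $\Pr(r_1=1)=p$ and, for every $n\ge2$, $\Pr(r_n=1\mid r_1,\dots,r_{n-1})=\lambda_n p+(1-\lambda_n)\bar p_{n-1}$, where $\bar p_m=\frac1m\sum_{i=1}^m r_i$. Define $\hat r_1=r_1$, $\hat r_i=\frac{r_i-(1-\lambda_i)\bar p_{i-1}}{\lambda_i}$ for $i\ge2$, and for weights $\omega_1,\dots,\omega_n>0$ let $\hat p_n=\frac{\sum_{i=1}^n\omega_i\hat r_i}{\sum_{i=1}^n\omega_i}$. Let $\epsilon>0$ and $\alpha\in(0,1)$. If \[\Big(\sum_{i=1}^n\omega_i\Big)^2\ge\frac{1}{2\epsilon^2}\log\frac{2}{\alpha}\sum_{i=1}^n\Big(\frac{\omega_i}{\lambda_i}\Big)^2,\] then $\Pr(|\hat p_n-p|\le\epsilon)\ge1-\alpha$.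
   Context: $\log$ denotes the natural logarithm. *)

From HB Require Import structures.
From mathcomp Require Import all_boot all_order all_algebra.
From mathcomp Require Import all_classical all_reals all_analysis.
Set Implicit Arguments. Unset Strict Implicit. Unset Printing Implicit Defensive.
Import Order.TTheory GRing.Theory Num.Theory.
Local Open Scope ring_scope.
Local Open Scope classical_set_scope.

(* Indices are 1-based as in the paper; r 0, lambda 0, omega 0 are unused. *)

Definition pbar {T : Type} {R : realType} (r : nat -> T -> R) (m : nat) (x : T) : R :=
  (m%:R)^-1 * \sum_(1 <= i < m.+1) r i x.

Definition cyl {T : Type} {R : realType} (r : nat -> T -> R) (m : nat) (s : nat -> bool)
  : set T := [set x | forall i, (1 <= i <= m)%N -> r i x = (s i)%:R].

Definition sbar {R : realType} (s : nat -> bool) (m : nat) : R :=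
  (m%:R)^-1 * \sum_(1 <= i < m.+1) ((s i)%:R : R).

(* Pr(r_n = 1 | r_1,...,r_{n-1}) = lambda_n p + (1 - lambda_n) pbar_{n-1}, n >= 2,
   written out for the discrete conditioning variables (r_1,...,r_{n-1}):
   for every value s of (r_1,...,r_{n-1}),
   P(r_1..r_{n-1} = s, r_n = 1) = (lambda_n p + (1-lambda_n) sbar s) P(r_1..r_{n-1} = s). *)
Definition cond_law {d : measure_display} {T : measurableType d} {R : realType}
  (P : probability T R) (r : nat -> T -> R) (p : R) (lambda : nat -> R) : Prop :=
  forall (n : nat) (s : nat -> bool), (2 <= n)%N ->
    P (cyl r n.-1 s `&` [set x | r n x = 1]) =
    ((lambda n * p + (1 - lambda n) * sbar s n.-1)%:E * P (cyl r n.-1 s))%E.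

Definition rhat {T : Type} {R : realType} (r : nat -> T -> R) (lambda : nat -> R)
  (i : nat) (x : T) : R :=
  if i == 1%N then r 1%N x
  else (r i x - (1 - lambda i) * pbar r i.-1 x) / lambda i.

Definition phat {T : Type} {R : realType} (r : nat -> T -> R) (lambda omega : nat -> R)
  (n : nat) (x : T) : R :=
  (\sum_(1 <= i < n.+1) omega i * rhat r lambda i x) / (\sum_(1 <= i < n.+1) omega i).

From HB Require Import structures.
From mathcomp Require Import all_boot all_order all_algebra.
From mathcomp Require Import all_classical all_reals all_analysis.
From mathcomp Require Import ring lra.
Import Order.TTheory GRing.Theory Num.Theory.
Import numFieldNormedType.Exports.
Local Open Scope ring_scope.
Local Open Scope classical_set_scope.

(* Writing [W = sum_i omega_i], one has [W (\hat p_n - p) = M_n], where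
   [M_k = sum_(i <= k) omega_i (\hat r_i - p)] is a martingale: given [r_1..r_k], its
   increment is [omega_(k+1) / lambda_(k+1)] times the centred Bernoulli variable
   [r_(k+1) - q_k], [q_k] being the conditional probability of [r_(k+1) = 1].
   Hoeffding's lemma [E e^(u (X - q)) <= e^(u^2/8)] for [X ~ Bernoulli(q)] bounds the
   conditional moment generating function of each increment, so that
   [E e^(h M_n) <= e^(h^2 V / 8)] with [V = sum_i (omega_i / lambda_i)^2], and the
   Chernoff bound with [h = 4 t / V] gives [Pr(|M_n| > t) <= 2 e^(-2 t^2 / V)].
   As the [r_i] are {0,1}-valued, every expectation is a finite sum over the binary
   strings of length [n], weighted by the probabilities of the cylinder events
   [{r_1..r_n = s}], which the conditional law computes recursively. *)

Lemma is_derive_ge0_ler (R : realType) (f df : R -> R) (a b : R) :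
  (forall x : R, is_derive x 1 f (df x)) ->
  (forall x, a <= x <= b -> 0 <= df x) -> a <= b -> f a <= f b.
Proof.
move=> f_df df_ge0 ab; apply: (ger0_derive1_ndecr _ _ _ (lexx a) ab (lexx b)).
- by move=> x _; case: (f_df x).
- move=> x; rewrite in_itv /= => /andP[ax xb].
  by rewrite derive1E derive_val df_ge0 // (ltW ax) (ltW xb).
- apply: continuous_subspaceT => x; apply: differentiable_continuous.
  by apply/derivable1_diffP; case: (f_df x).
Qed.

Section HoeffdingBernoulli.
Variables (R : realType) (q : R).
Hypothesis q01 : 0 <= q <= 1.

(* [ln (D u) - q u] is the log-moment generating function of [X - q] for
   [X ~ Bernoulli(q)]; it is at most [u^2/8] because [f] below and its derivative [g]
   vanish at [0] while [g' = dg >= 0]. *)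
Let D (x : R) : R := 1 - q + q * expR x.

Let D_gt0 x : 0 < D x.
Proof. by rewrite /D; have := expR_gt0 x; case/andP: q01 => ? ?; nra. Qed.

Let D_neq0 x : D x != 0.
Proof. exact: lt0r_neq0 (D_gt0 x). Qed.

Let is_derive_D (x : R) : is_derive x 1 D (q * expR x).
Proof.
have -> : D = cst (1 - q) + q \*: expR by apply/funext.
apply: is_derive_eq (is_deriveD (is_derive_cst _ _ _) (is_deriveZ q (is_derive_expR x))) _.
by rewrite add0r.
Qed.

Let g (x : R) : R := x / 4 + q - q * expR x / D x.

Let dg (x : R) : R := (1 - q - q * expR x) ^+ 2 / (4 * D x ^+ 2).

Let is_derive_g (x : R) : is_derive x 1 g (dg x).
Proof.
have -> : g = (4^-1 \*: id + cst q) - q \*: (expR * (fun y => (D y)^-1)).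
  by apply/funext => y; rewrite /g !fctE /= mulrC -mulrA.
have dV := is_deriveV (D_neq0 x) (is_derive_D x).
have dexp := is_derive_expR x.
apply: is_derive_eq (is_deriveB (is_deriveD (is_deriveZ 4^-1 (is_derive_id x 1))
  (is_derive_cst q x 1)) (is_deriveZ q (is_deriveM dexp dV))) _.
have := D_neq0 x; rewrite /dg /D /GRing.scale /= => ?; by field.
Qed.

Let g_ge0 x : 0 <= x -> 0 <= g x.
Proof.
move=> x0; have g0 : g 0 = 0 by rewrite /g /D expR0 mulr1 subrK divr1 mul0r add0r subrr.
rewrite -g0; apply: (@is_derive_ge0_ler _ g dg _ _ is_derive_g _ x0) => y _.
by rewrite divr_ge0 ?sqr_ge0 // mulr_ge0 ?sqr_ge0.
Qed.

Let f (x : R) : R := x ^+ 2 / 8 + q * x - ln (D x).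

Let is_derive_f (x : R) : is_derive x 1 f (g x).
Proof.
have -> : f = (8^-1 \*: (id ^+ 2) + q \*: id) - (@ln R \o D).
  by apply/funext => y; rewrite /f !fctE /= mulrC.
apply: is_derive_eq (is_deriveB (is_deriveD (is_deriveZ 8^-1 (is_deriveX 2 (is_derive_id x 1)))
  (is_deriveZ q (is_derive_id x 1))) (is_derive1_comp (is_derive1_ln (D_gt0 x)) (is_derive_D x))) _.
have := D_neq0 x; rewrite /g /D /GRing.scale /= => ?; by field.
Qed.

Lemma hoeffding_bernoulli_ge0 u : 0 <= u ->
  q * expR (u * (1 - q)) + (1 - q) * expR (- (u * q)) <= expR (u ^+ 2 / 8).
Proof.
move=> u0; have f0 : f 0 = 0.
  by rewrite /f /D expR0 mulr1 subrK ln1 expr0n /= mul0r mulr0 !addr0 subr0.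
have : f 0 <= f u by apply: (@is_derive_ge0_ler _ f g _ _ is_derive_f _ u0) => y /andP[/g_ge0].
rewrite f0 /f subr_ge0 -ler_expR lnK ?posrE // => DleE.
have -> : q * expR (u * (1 - q)) + (1 - q) * expR (- (u * q)) = expR (- (u * q)) * D u.
  by rewrite /D mulrBr mulr1 expRD; ring.
have -> : u ^+ 2 / 8 = - (u * q) + (u ^+ 2 / 8 + q * u) by ring.
by rewrite expRD ler_wpM2l // ltW ?expR_gt0.
Qed.

End HoeffdingBernoulli.

Lemma hoeffding_bernoulli (R : realType) (q u : R) : 0 <= q <= 1 ->
  q * expR (u * (1 - q)) + (1 - q) * expR (- (u * q)) <= expR (u ^+ 2 / 8).
Proof.
move=> q01; have [u_ge0|u_lt0] := leP 0 u; first exact: hoeffding_bernoulli_ge0.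
have q'01 : 0 <= 1 - q <= 1 by case/andP: q01 => ? ?; apply/andP; split; lra.
have nu_ge0 : 0 <= - u by rewrite oppr_ge0 ltW.
have := @hoeffding_bernoulli_ge0 _ _ q'01 _ nu_ge0.
by rewrite sqrrN subKr !mulNr opprK addrC.
Qed.

Lemma two_expRN_le (R : realType) (alpha x : R) :
  0 < alpha -> ln (2 / alpha) <= x -> 2 * expR (- x) <= alpha.
Proof.
move=> alpha_gt0 ln_le; have a2_gt0 : 0 < 2 / alpha by rewrite divr_gt0.
have -> : alpha = 2 * expR (- ln (2 / alpha)).
  by rewrite -lnV ?posrE // invf_div lnK ?posrE ?divr_gt0 // mulrC divfK // pnatr_eq0.
by rewrite ler_pM2l // ler_expR lerN2.
Qed.

Lemma sbar_ge0_le1 (R : realType) (s : nat -> bool) k : 0 <= (sbar s k : R) <= 1.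
Proof.
rewrite /sbar; case: k => [|k]; first by rewrite invr0 mul0r lexx ler01.
have sum_ge0 : 0 <= \sum_(1 <= i < k.+2) ((s i)%:R : R) by apply: sumr_ge0 => i _.
have sum_le : \sum_(1 <= i < k.+2) ((s i)%:R : R) <= k.+1%:R.
  apply: (@le_trans _ _ (\sum_(1 <= i < k.+2) (1 : R))).
    by apply: ler_sum => i _; case: (s i).
  by rewrite sumr_const_nat subn1.
by rewrite mulr_ge0 ?invr_ge0 //= ler_pdivrMl ?ltr0n // mulr1.
Qed.

Lemma sum_nat_gt0 (R : numDomainType) (F : nat -> R) n : (0 < n)%N ->
  (forall i, (1 <= i <= n)%N -> 0 < F i) -> 0 < \sum_(1 <= i < n.+1) F i.
Proof.
move=> n_gt0 F_gt0; rewrite big_ltn //; apply: ltr_wpDr; last by apply: F_gt0; rewrite n_gt0.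
rewrite big_nat_cond; apply: sumr_ge0 => i /andP[/andP[i_gt1 i_le] _].
by apply/ltW/F_gt0; rewrite (ltnW i_gt1).
Qed.

Definition set_bit (s : nat -> bool) (j : nat) (b : bool) (i : nat) : bool :=
  if i == j then b else s i.

Lemma set_bit_eq s j b : set_bit s j b j = b.
Proof. by rewrite /set_bit eqxx. Qed.

Lemma set_bit_lt s j b i : (i < j)%N -> set_bit s j b i = s i.
Proof. by move=> ij; rewrite /set_bit ltn_eqF. Qed.

(* The strings vanishing outside [1, k], listed so that [bitstrings k.+1] refines
   each string of [bitstrings k] by the two values of its bit [k.+1]. *)
Fixpoint bitstrings (k : nat) : seq (nat -> bool) :=
  if k is k'.+1 then
    flatten [seq [:: set_bit s k'.+1 false; set_bit s k'.+1 true] | s <- bitstrings k']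
  else [:: fun _ => false].

Definition bitr (R : realType) (i : nat) (s : nat -> bool) : R := (s i)%:R.

Section PrefixDependence.
Variables (R : realType) (T1 T2 : Type) (r1 : nat -> T1 -> R) (r2 : nat -> T2 -> R).
Variables (x1 : T1) (x2 : T2) (k : nat).
Hypothesis r12 : forall i, (1 <= i <= k)%N -> r1 i x1 = r2 i x2.

Lemma eq_pbar m : (m <= k)%N -> pbar r1 m x1 = pbar r2 m x2.
Proof.
move=> mk; congr (_ * _); apply: eq_big_nat => i /andP[i_gt0 im].
by apply: r12; rewrite i_gt0 (leq_trans _ mk) // -ltnS.
Qed.

Lemma eq_rhat lambda i : (1 <= i <= k)%N -> rhat r1 lambda i x1 = rhat r2 lambda i x2.
Proof.
move=> /andP[i_gt0 ik]; rewrite /rhat; case: eqP => [_|_].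
  by apply: r12; rewrite leqnn (leq_trans i_gt0 ik).
rewrite r12; last by rewrite i_gt0 ik.
by rewrite (@eq_pbar i.-1) // (leq_trans (leq_pred i) ik).
Qed.

Lemma eq_phat lambda omega : phat r1 lambda omega k x1 = phat r2 lambda omega k x2.
Proof.
congr (_ / _); apply: eq_big_nat => i /andP[i_gt0 ik].
by rewrite eq_rhat // i_gt0 -ltnS.
Qed.

End PrefixDependence.

Section Model.
Context {d : measure_display} {T : measurableType d} {R : realType}.
Variables (P : probability T R) (r : nat -> T -> R).
Hypothesis r_measurable : forall i, measurable_fun setT (r i).
Hypothesis r01 : forall i x, r i x = 0 \/ r i x = 1.

Definition pr (A : set T) : R := fine (P A).

Lemma prE A : measurable A -> P A = (pr A)%:E.
Proof. by move=> mA; rewrite /pr fineK // fin_num_measure. Qed.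

Lemma pr_ge0 A : 0 <= pr A.
Proof. by rewrite fine_ge0 // measure_ge0. Qed.

Lemma prT : pr setT = 1.
Proof. by rewrite /pr probability_setT. Qed.

Lemma measurable_r_eq i (c : R) : measurable [set x | r i x = c].
Proof. by have := @r_measurable i measurableT _ (measurable_set1 c); rewrite setTI. Qed.

Lemma measurable_ler (f g : T -> R) : measurable_fun setT f -> measurable_fun setT g ->
  measurable [set x | f x <= g x].
Proof.
move=> mf mg.
have := @measurable_realfun.measurable_fun_ler _ _ _ setT f g mf mg measurableT [set true] I.
by rewrite setTI.
Qed.

Lemma cyl0 s : cyl r 0 s = setT.
Proof. by apply/seteqP; split => // x _ i /andP[i_gt0 /(leq_trans i_gt0)]. Qed.

Lemma eq_cyl k s t : (forall i, (1 <= i <= k)%N -> s i = t i) -> cyl r k s = cyl r k t.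
Proof. by move=> st; apply/seteqP; split => x /= + i ik => ->; rewrite ?st. Qed.

Lemma cyl_set_bit k s b :
  cyl r k.+1 (set_bit s k.+1 b) = cyl r k s `&` [set x | r k.+1 x = b%:R].
Proof.
have {1}-> : cyl r k s = cyl r k (set_bit s k.+1 b).
  by apply: eq_cyl => i /andP[_ ik]; rewrite set_bit_lt.
apply/seteqP; split => x /=.
- move=> xs; split; last by have := xs k.+1 (leqnn _); rewrite set_bit_eq.
  by move=> i /andP[i_gt0 ik]; apply: xs; rewrite i_gt0 leqW.
- move=> [xs xk] i /andP[i_gt0]; rewrite leq_eqVlt => /orP[/eqP->|ik].
    by rewrite set_bit_eq.
  by rewrite xs // i_gt0 -ltnS.
Qed.

Lemma measurable_cyl k s : measurable (cyl r k s).
Proof.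
elim: k s => [|k IH] s; first by rewrite cyl0.
rewrite (@eq_cyl _ _ (set_bit s k.+1 (s k.+1))); last first.
  by move=> i _; rewrite /set_bit; case: eqP => // ->.
by rewrite cyl_set_bit; apply: measurableI => //; apply: measurable_r_eq.
Qed.

Lemma pr_split_bit A j : measurable A ->
  pr A = \sum_(b <- [:: false; true]) pr (A `&` [set x | r j x = b%:R]).
Proof.
move=> mA; rewrite big_cons big_seq1.
have mAb b : measurable (A `&` [set x | r j x = b%:R]).
  exact: measurableI (measurable_r_eq _ _).
apply: EFin_inj; rewrite EFinD -!prE // -measureU //.
- congr (P _); apply/seteqP; split => [x Ax|x [] []] //=.
  by case: (r01 j x) => rj; [left|right].
- apply/seteqP; split => // x /= [[_ rj0] [_ rj1]]; move: rj0; rewrite rj1 /=.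
  by move/eqP; rewrite oner_eq0.
Qed.

Lemma pr_partition_cyl E k : measurable E ->
  pr E = \sum_(s <- bitstrings k) pr (E `&` cyl r k s).
Proof.
move=> mE; elim: k => [|k IH]; first by rewrite big_seq1 cyl0 setIT.
rewrite IH /= big_flatten big_map; apply: eq_bigr => s _.
rewrite (@pr_split_bit _ k.+1); last exact: measurableI (measurable_cyl _ _).
by rewrite !big_cons !big_nil !cyl_set_bit !setIA.
Qed.

Lemma pr_sum_cyl E k (Q : pred (nat -> bool)) : measurable E ->
  (forall s x, cyl r k s x -> E x = Q s) ->
  pr E = \sum_(s <- bitstrings k | Q s) pr (cyl r k s).
Proof.
move=> mE EQ; rewrite (@pr_partition_cyl _ k mE) [RHS]big_mkcond; apply: eq_bigr => s _.
case: ifP => Qs.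
  congr pr; apply/seteqP; split => [x []//|x xs].
  by split => //; rewrite (EQ s x xs).
have -> : E `&` cyl r k s = set0.
  by apply/seteqP; split => // x [+ xs]; rewrite (EQ s x xs) Qs.
by rewrite /pr measure0.
Qed.

Section Estimator.
Variables (p : R) (lambda omega : nat -> R).
Hypothesis lambda1 : lambda 1%N = 1.
Hypothesis lambda_decr : forall k, (1 < k)%N -> 0 < lambda k <= lambda k.-1.
Hypothesis p01 : 0 < p < 1.
Hypothesis Pr1 : P [set x | r 1%N x = 1] = p%:E.
Hypothesis law : cond_law P r p lambda.

Lemma lambda_gt0_le1 k : (0 < k)%N -> 0 < lambda k <= 1.
Proof.
elim: k => // -[_ _|k IH _]; first by rewrite lambda1 ltr01 lexx.
have /andP[lk_gt0 lk_le] := lambda_decr k.+2 isT.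
by rewrite lk_gt0 (le_trans lk_le) //; case/andP: (IH isT).
Qed.

(* Indexed by the length [k] of the conditioning prefix: it is the law of [r_(k+1)]. *)
Definition cond_prob k s := lambda k.+1 * p + (1 - lambda k.+1) * sbar s k.

Lemma cond_prob0 s : cond_prob 0 s = p.
Proof. by rewrite /cond_prob lambda1 mul1r subrr mul0r addr0. Qed.

Lemma cond_prob_ge0_le1 k s : 0 <= cond_prob k s <= 1.
Proof.
have /andP[p_gt0 p_lt1] := p01; have /andP[l_gt0 l_le1] := lambda_gt0_le1 k.+1 isT.
have /andP[sb_ge0 sb_le1] := sbar_ge0_le1 R s k.
rewrite /cond_prob; apply/andP; split; nra.
Qed.

Lemma pr_cyl_true k s :
  pr (cyl r k.+1 (set_bit s k.+1 true)) = cond_prob k s * pr (cyl r k s).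
Proof.
rewrite cyl_set_bit; case: k => [|k].
  by rewrite cond_prob0 cyl0 setTI prT mulr1 /pr Pr1.
by rewrite /pr (law k.+2 s isT) (prE _ (measurable_cyl _ _)) -EFinM.
Qed.

Lemma pr_cyl_false k s :
  pr (cyl r k.+1 (set_bit s k.+1 false)) = (1 - cond_prob k s) * pr (cyl r k s).
Proof.
have := @pr_split_bit _ k.+1 (measurable_cyl k s).
rewrite big_cons big_seq1 -!cyl_set_bit pr_cyl_true => cyl_split.
by rewrite mulrBl mul1r {1}cyl_split addrK.
Qed.

Lemma rhat_bitr_set_bit k s b :
  rhat (@bitr R) lambda k.+1 (set_bit s k.+1 b) - p = (b%:R - cond_prob k s) / lambda k.+1.
Proof.
rewrite /rhat /bitr set_bit_eq; case: k => [|k] /=.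
  by rewrite cond_prob0 lambda1 divr1.
have /andP[l_gt0 _] := lambda_gt0_le1 k.+2 isT.
rewrite (@eq_pbar _ _ _ _ (@bitr R) _ s k.+1) //; last first.
  by move=> i /andP[_ ik]; rewrite set_bit_lt.
have l_neq0 := lt0r_neq0 l_gt0.
(* Naming the running mean keeps [field] from asking for [k.+1%:R != 0]. *)
rewrite /cond_prob /sbar /pbar /bitr; set mean := _ * \sum_(_ <= _ < _) _.
by field.
Qed.

Definition mart k s := \sum_(1 <= i < k.+1) omega i * (rhat (@bitr R) lambda i s - p).

Definition var_proxy k := \sum_(1 <= i < k.+1) (omega i / lambda i) ^+ 2.

Lemma mart_set_bit k s b : mart k.+1 (set_bit s k.+1 b) =
  mart k s + omega k.+1 / lambda k.+1 * (b%:R - cond_prob k s).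
Proof.
rewrite /mart big_nat_recr //= rhat_bitr_set_bit; congr (_ + _); last by rewrite mulrA mulrAC.
apply: eq_big_nat => i /andP[i_gt0 ik]; congr (_ * (_ - _)).
apply: (@eq_rhat _ _ _ _ _ _ _ k); last by rewrite i_gt0 -ltnS.
by move=> j /andP[_ jk]; rewrite /bitr set_bit_lt.
Qed.

Lemma mgf_mart_le h k :
  \sum_(s <- bitstrings k) expR (h * mart k s) * pr (cyl r k s) <=
    expR (h ^+ 2 * var_proxy k / 8).
Proof.
elim: k => [|k IH].
  by rewrite big_seq1 cyl0 prT /mart /var_proxy !big_geq // !(mulr0, mul0r) expR0.
rewrite /= big_flatten big_map; set c := omega k.+1 / lambda k.+1.
have step s : \sum_(t <- [:: set_bit s k.+1 false; set_bit s k.+1 true])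
    expR (h * mart k.+1 t) * pr (cyl r k.+1 t) <=
    expR (h * mart k s) * pr (cyl r k s) * expR ((h * c) ^+ 2 / 8).
  set q := cond_prob k s.
  have -> : \sum_(t <- [:: set_bit s k.+1 false; set_bit s k.+1 true])
      expR (h * mart k.+1 t) * pr (cyl r k.+1 t) = expR (h * mart k s) * pr (cyl r k s) *
      (q * expR (h * c * (1 - q)) + (1 - q) * expR (- (h * c * q))).
    have E0 : expR (h * (mart k s + c * (false%:R - q))) =
        expR (h * mart k s) * expR (- (h * c * q)) by rewrite -expRD /=; congr expR; ring.
    have E1 : expR (h * (mart k s + c * (true%:R - q))) =
        expR (h * mart k s) * expR (h * c * (1 - q)) by rewrite -expRD /=; congr expR; ring.
    rewrite !big_cons big_nil !mart_set_bit pr_cyl_true pr_cyl_false -/c -/q E0 E1.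
    ring.
  by rewrite ler_wpM2l ?hoeffding_bernoulli ?cond_prob_ge0_le1 // mulr_ge0 ?expR_ge0 ?pr_ge0.
rewrite (le_trans (ler_sum _ (fun s _ => step s))) // -mulr_suml.
rewrite (le_trans (ler_wpM2r (expR_ge0 _) IH)) // -expRD ler_expR.
by rewrite /var_proxy [in X in _ <= X]big_nat_recr //= -/c; lra.
Qed.

Lemma tail_mart_le t n : 0 < t -> 0 < var_proxy n ->
  \sum_(s <- bitstrings n | ~~ (`|mart n s| <= t)) pr (cyl r n s) <=
    2 * expR (- (2 * t ^+ 2 / var_proxy n)).
Proof.
move=> t_gt0 V_gt0; set V := var_proxy n; set h := 4 * t / V.
have h_ge0 : 0 <= h by rewrite divr_ge0 ?mulr_ge0 // ltW.
(* Chernoff: the indicator of [t < |mart n s|] is at most [bound s]; the choice of [h]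
   minimises the resulting bound. *)
pose bound s := expR (- (h * t)) * (expR (h * mart n s) + expR (- h * mart n s)).
have one_le_expRD (a b : R) : 0 <= a -> 1 <= expR a + expR b.
  by move=> a_ge0; rewrite -[1]addr0; apply: lerD; rewrite ?expR_ge0 // -expR0 ler_expR.
have indicator_le s : ~~ (`|mart n s| <= t) -> 1 <= bound s.
  rewrite -ltNge ltr_normr /bound mulrDr -!expRD => /orP[] dev.
    by apply: one_le_expRD; nra.
  by rewrite addrC; apply: one_le_expRD; nra.
apply: (@le_trans _ _ (\sum_(s <- bitstrings n) bound s * pr (cyl r n s))).
  rewrite big_mkcond; apply: ler_sum => s _; case: ifP => [/indicator_le dev|_].
    by rewrite -[X in X <= _]mul1r ler_wpM2r ?pr_ge0.
  by rewrite mulr_ge0 ?pr_ge0 // mulr_ge0 ?expR_ge0 // addr_ge0 ?expR_ge0.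
under eq_bigr do rewrite /bound -mulrA mulrDl.
rewrite -mulr_sumr big_split /=.
apply: le_trans (ler_wpM2l (expR_ge0 _) (lerD (mgf_mart_le h n) (mgf_mart_le (- h) n))) _.
have V_neq0 := lt0r_neq0 V_gt0.
have -> : - (h * t) = - (2 * t ^+ 2 / V) - h ^+ 2 * V / 8 by rewrite /h; field.
by rewrite sqrrN mulrDr -!expRD subrK; lra.
Qed.

Lemma var_proxy_gt0 n : (0 < n)%N -> (forall i, (1 <= i <= n)%N -> 0 < omega i) ->
  0 < var_proxy n.
Proof.
move=> n_gt0 omega_gt0; apply: sum_nat_gt0 => // i i_range.
have /andP[i_gt0 _] := i_range; have /andP[lambda_i_gt0 _] := lambda_gt0_le1 i i_gt0.
by rewrite exprn_gt0 // divr_gt0 ?omega_gt0.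
Qed.

Lemma mart_phat n s : \sum_(1 <= i < n.+1) omega i != 0 ->
  mart n s = (\sum_(1 <= i < n.+1) omega i) * (phat (@bitr R) lambda omega n s - p).
Proof.
move=> W_neq0; rewrite /mart /phat; under eq_bigr do rewrite mulrBr.
by rewrite sumrB -mulr_suml; field.
Qed.

Lemma measurable_phat_dev n eps :
  measurable [set x | `|phat r lambda omega n x - p| <= eps].
Proof.
have measurable_pbar k : measurable_fun setT (pbar r k).
  apply: measurable_realfun.measurable_funM; first exact: measurable_cst.
  by apply: measurable_sum => i; apply: r_measurable.
have measurable_rhat i : measurable_fun setT (rhat r lambda i).
  rewrite /rhat; case: (i == 1%N); first exact: r_measurable.
  apply: measurable_realfun.measurable_funM; last exact: measurable_cst.
  apply: measurable_realfun.measurable_funB; first exact: r_measurable.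
  by apply: measurable_realfun.measurable_funM; first exact: measurable_cst.
apply: measurable_ler (measurable_cst _).
apply: (measurableT_comp (@measurable_realfun.normr_measurable _ setT)).
apply: measurable_realfun.measurable_funB (measurable_cst _).
apply: measurable_realfun.measurable_funM (measurable_cst _).
apply: measurable_sum => i.
by apply: measurable_realfun.measurable_funM; first exact: measurable_cst.
Qed.

Lemma azuma_hoeffding_phat n eps : (0 < n)%N -> (forall i, (1 <= i <= n)%N -> 0 < omega i) -> 0 < eps ->
  1 - 2 * expR (- (2 * (eps * \sum_(1 <= i < n.+1) omega i) ^+ 2 / var_proxy n)) <=
    pr [set x | `|phat r lambda omega n x - p| <= eps].
Proof.
move=> n_gt0 omega_gt0 eps_gt0.
set W := \sum_(1 <= i < n.+1) omega i; set t := eps * W.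
have W_gt0 : 0 < W by exact: sum_nat_gt0.
pose close s := `|mart n s| <= t.
have close_phat s x : cyl r n s x -> (`|phat r lambda omega n x - p| <= eps : Prop) = close s.
  move=> xs; rewrite (@eq_phat _ _ _ r (@bitr R) x s n); last exact: xs.
  rewrite /close mart_phat ?lt0r_neq0 // normrM (gtr0_norm W_gt0) [W * _]mulrC.
  by rewrite ler_pM2r.
rewrite (@pr_sum_cyl _ n close (measurable_phat_dev _ _) close_phat).
have total : 1 = \sum_(s <- bitstrings n | close s) pr (cyl r n s) +
                 \sum_(s <- bitstrings n | ~~ close s) pr (cyl r n s).
  rewrite -prT (@pr_partition_cyl _ n measurableT) (bigID close) /=.
  by congr (_ + _); apply: eq_bigr => s _; rewrite setTI.
have := tail_mart_le t n (mulr_gt0 eps_gt0 W_gt0) (var_proxy_gt0 n n_gt0 omega_gt0).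
rewrite -/close; lra.
Qed.

End Estimator.
End Model.

Theorem theoremA14 (d : measure_display) (T : measurableType d) (R : realType)
  (P : probability T R) (p : R) (lambda : nat -> R) (r : nat -> T -> R)
  (omega : nat -> R) (n : nat) (eps alpha : R) :
  0 < p < 1 ->
  lambda 1%N = 1 ->
  (forall k, (1 < k)%N -> 0 < lambda k <= lambda k.-1) ->
  (forall i, measurable_fun setT (r i)) ->
  (forall i x, r i x = 0 \/ r i x = 1) ->
  P [set x | r 1%N x = 1] = p%:E ->
  cond_law P r p lambda ->
  (0 < n)%N ->
  (forall i, (1 <= i <= n)%N -> 0 < omega i) ->
  0 < eps -> 0 < alpha < 1 ->
  (\sum_(1 <= i < n.+1) omega i) ^+ 2 >=
    (2 * eps ^+ 2)^-1 * ln (2 / alpha) * \sum_(1 <= i < n.+1) (omega i / lambda i) ^+ 2 ->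
  ((1 - alpha)%:E <= P [set x | (`|phat r lambda omega n x - p| <= eps)%R])%E.
Proof.
move=> p01 lambda1 lambda_decr r_measurable r01 Pr1 law n_gt0 omega_gt0 eps_gt0.
move=> /andP[alpha_gt0 _] hyp.
set W := \sum_(1 <= i < n.+1) omega i.
have V_gt0 : 0 < var_proxy lambda omega n by exact: var_proxy_gt0.
rewrite prE ?lee_fin; last exact: measurable_phat_dev.
apply: (@le_trans _ _ (1 - 2 * expR (- (2 * (eps * W) ^+ 2 / var_proxy lambda omega n)))).
  rewrite lerD2l lerN2 two_expRN_le //.
  move: hyp; rewrite -mulrA ler_pdivrMl ?mulr_gt0 ?exprn_gt0 // => hyp.
  by rewrite ler_pdivlMr // exprMn mulrA.
exact: azuma_hoeffding_phat.
Qed.
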